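(* Let $f=z^4+f_2z^2+f_3z+f_4$ with $f_j\in\mathbb{R}[x,y]$ homogeneous of degree $j$, and let $f=p_1^2+p_2^2+p_3^2$ with quadratic forms $p_i\in\mathbb{R}[x,y,z]$. Write $p_i=u_iz^2+v_iz+w_i$ with $u_i\in\mathbb{R}$, $v_i,w_i\in\mathbb{R}[x,y]$ homogeneous of degrees $1,2$. Then $u=(u_1,u_2,u_3)^t$ is a unit vector; choose $S\in O_3(\mathbb{R})$ with $Su=(1,0,0)^t$, let $(v'_i)=Sv$, $(w'_i)=Sw$, and put $\xi=2w'_1$, $\eta=2(v'_2w'_3-v'_3w'_2)$. Then $\eta^2+f_3^2=(f_2-\xi)(4f_4-\xi^2)$ and both $f_2-\xi$ and $4f_4-\xi^2$ are psd. Moreover $\xi$ does not depend on the choice of $S$, and depends only on the orthogonal equivalence class of the representation $f=\sum_i p_i^2$.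
   Context: psd means taking only nonnegative values on real points. Two representations $f=\sum_{i=1}^3p_i^2=\sum_{i=1}^3p_i'^2$ with quadratic forms $p_i,p_i'$ are (orthogonally) equivalent if there is $S=(s_{ij})\in O_3(\mathbb{R})$ with $p'_j=\sum_i s_{ij}p_i$ for $j=1,2,3$. *)

From HB Require Import structures.
From mathcomp Require Import all_boot all_order all_algebra.
From mathcomp Require Export mpoly.
Set Implicit Arguments. Unset Strict Implicit. Unset Printing Implicit Defensive.
Import Order.TTheory GRing.Theory Num.Theory.
Local Open Scope ring_scope.

(* Binary forms live in {mpoly R[2]} ('X_0 = x, 'X_1 = y); ternary forms are
   viewed as elements of R[x,y][z] = {poly {mpoly R[2]}} (z = 'X). *)

Definition psd2 (R : rcfType) (g : {mpoly R[2]}) : Prop :=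
  forall a : 'I_2 -> R, 0 <= g.@[a].

Definition orthogonal3 (R : rcfType) (S : 'M[R]_3) : Prop := S *m S^T = 1%:M.

Definition mact (R : rcfType) (V : lmodType R) (S : 'M[R]_3) (v : 'I_3 -> V)
  : 'I_3 -> V := fun i => \sum_(j < 3) S i j *: v j.

Definition qform (R : rcfType) (u : R) (v w : {mpoly R[2]}) : {poly {mpoly R[2]}} :=
  (u%:MP)%:P * 'X^2 + v%:P * 'X + w%:P.

(* xi = 2 w'_1 and eta = 2 (v'_2 w'_3 - v'_3 w'_2) for (v',w') = (S v, S w). *)
Definition xi_of (R : rcfType) (S : 'M[R]_3) (w : 'I_3 -> {mpoly R[2]}) : {mpoly R[2]} :=
  2%:R * mact S w 0.
Definition eta_of (R : rcfType) (S : 'M[R]_3) (v w : 'I_3 -> {mpoly R[2]}) : {mpoly R[2]} :=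
  2%:R * (mact S v 1 * mact S w 2 - mact S v 2 * mact S w 1).

Definition maps_to_e1 (R : rcfType) (S : 'M[R]_3) (u : 'I_3 -> R) : Prop :=
  forall i : 'I_3, \sum_(j < 3) S i j * u j = (i == 0 :> 'I_3)%:R.

From HB Require Import structures.
From mathcomp Require Import all_boot all_order all_algebra.
From mathcomp Require Import mpoly ring.
Import Order.TTheory GRing.Theory Num.Theory.
Set Implicit Arguments.
Unset Strict Implicit.
Local Open Scope ring_scope.

(* Comparing coefficients of z in f = sum_i p_i^2 gives |u|^2 = 1, <u,v> = 0,
   f2 = |v|^2 + 2<u,w>, f3 = 2<v,w> and f4 = |w|^2. An orthogonal S preserves
   these dot products, and S u = e1 forces the first row of S to be u^t; hence
   v'_1 = <u,v> = 0 and xi = 2 w'_1 = 2<u,w>, which does not involve S and is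
   unchanged when the p_i are replaced by an orthogonal combination of them.
   Moreover f2 - xi = v'_2^2 + v'_3^2, 4 f4 - xi^2 = 4 (w'_2^2 + w'_3^2) and
   f3 = 2 (v'_2 w'_2 + v'_3 w'_3), so the identity for eta is Lagrange's
   identity for two pairs. *)

Lemma coef_quadratic_sqr (B : comNzRingType) (a b c : B) (k : nat) :
  ((a%:P * 'X^2 + b%:P * 'X + c%:P) ^+ 2)`_k =
  match k with
  | 0 => c ^+ 2 | 1 => b * c *+ 2 | 2 => b ^+ 2 + a * c *+ 2
  | 3 => a * b *+ 2 | 4 => a ^+ 2 | _ => 0 end.
Proof.
have -> : (a%:P * 'X^2 + b%:P * 'X + c%:P) ^+ 2 =
  (a ^+ 2)%:P * 'X^4 + (a * b *+ 2)%:P * 'X^3 + (b ^+ 2 + a * c *+ 2)%:P * 'X^2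
  + (b * c *+ 2)%:P * 'X + (c ^+ 2)%:P by ring.
rewrite !coefD !coefCM !coefXn coefX coefC.
by case: k => [|[|[|[|[|k]]]]]; rewrite /= ?(mulr0, mulr1, addr0, add0r).
Qed.

Lemma sos_quartic_coef (B : comNzRingType) (I : finType) (f2 f3 f4 : B) (a b c : I -> B) :
  'X^4 + f2%:P * 'X^2 + f3%:P * 'X + f4%:P
    = \sum_i ((a i)%:P * 'X^2 + (b i)%:P * 'X + (c i)%:P) ^+ 2 ->
  [/\ \sum_i a i ^+ 2 = 1, (\sum_i a i * b i) *+ 2 = 0,
      f2 = \sum_i b i ^+ 2 + (\sum_i a i * c i) *+ 2,
      f3 = (\sum_i b i * c i) *+ 2 & f4 = \sum_i c i ^+ 2].
Proof.
move=> Hf.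
have lhs k : ('X^4 + f2%:P * 'X^2 + f3%:P * 'X + f4%:P : {poly B})`_k =
    match k with 0 => f4 | 1 => f3 | 2 => f2 | 3 => 0 | 4 => 1 | _ => 0 end.
  rewrite !coefD !coefCM !coefXn coefX coefC.
  by case: k => [|[|[|[|[|k]]]]]; rewrite /= ?(mulr0, mulr1, addr0, add0r).
have coef k : (match k with 0 => f4 | 1 => f3 | 2 => f2 | 3 => 0 | 4 => 1 | _ => 0 end)
    = \sum_i match k with
      | 0 => c i ^+ 2 | 1 => b i * c i *+ 2 | 2 => b i ^+ 2 + a i * c i *+ 2
      | 3 => a i * b i *+ 2 | 4 => a i ^+ 2 | _ => 0 end.
  by rewrite -lhs Hf coef_sum; apply: eq_bigr => i _; apply: coef_quadratic_sqr.
move: (coef 0%N) (coef 1%N) (coef 2%N) (coef 3%N) (coef 4%N) => /= -> -> -> ab0 /esym ->.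
by rewrite big_split -!sumrMnl -ab0.
Qed.

Lemma sum_ord3 (V : nmodType) (F : 'I_3 -> V) : \sum_i F i = F 0 + F 1 + F 2.
Proof.
by rewrite !big_ord_recl big_ord0 addr0 addrA; congr (_ + F _ + F _); apply: val_inj.
Qed.

Section OrthogonalAction.
Variable R : rcfType.
Implicit Types (S : 'M[R]_3) (u : 'I_3 -> R).

Lemma orthogonal3_mulTmx S : orthogonal3 S -> S^T *m S = 1%:M.
Proof. exact: mulmx1C. Qed.

Lemma orthogonal3_trmx S : orthogonal3 S -> orthogonal3 S^T.
Proof. by rewrite /orthogonal3 trmxK => /orthogonal3_mulTmx. Qed.

Lemma orthogonal3_row0 S u : orthogonal3 S -> maps_to_e1 S u -> forall j, S 0 j = u j.
Proof.
move=> HS Hu j.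
have Su : S *m \col_k u k = delta_mx 0 0.
  apply/matrixP => i k; rewrite !mxE ord1 eqxx andbT -Hu.
  by apply: eq_bigr => l _; rewrite mxE.
have := congr1 (mulmx S^T) Su; rewrite mulmxA orthogonal3_mulTmx // mul1mx -colE.
by move/matrixP/(_ j 0); rewrite !mxE.
Qed.

Lemma mact_row0 (V : lmodType R) S u (y : 'I_3 -> V) :
  orthogonal3 S -> maps_to_e1 S u -> mact S y 0 = \sum_j u j *: y j.
Proof. by move=> HS Hu; apply: eq_bigr => j _; rewrite (orthogonal3_row0 HS Hu). Qed.

Section Algebra.
Variable A : algType R.
Implicit Types x y : 'I_3 -> A.

Lemma mact_dot S x y : orthogonal3 S ->
  \sum_i mact S x i * mact S y i = \sum_j x j * y j.
Proof.
move=> /orthogonal3_mulTmx HS; rewrite /mact.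
transitivity (\sum_j \sum_k (\sum_i S i j * S i k) *: (x j * y k)).
  under eq_bigr do rewrite big_distrlr.
  rewrite exchange_big; apply: eq_bigr => j _; rewrite exchange_big.
  apply: eq_bigr => k _; rewrite scaler_suml; apply: eq_bigr => i _.
  by rewrite /= -scalerAl -scalerAr scalerA.
apply: eq_bigr => j _.
have col_dot k : \sum_i S i j * S i k = (j == k)%:R.
  by move/matrixP/(_ j k): HS; rewrite !mxE; under eq_bigr do rewrite mxE.
rewrite (bigD1 j) //= col_dot eqxx scale1r big1 ?addr0 // => k /negbTE kj.
by rewrite col_dot eq_sym kj scale0r.
Qed.

Lemma mact_sqr_sum S x : orthogonal3 S -> \sum_i mact S x i ^+ 2 = \sum_j x j ^+ 2.
Proof.
move=> HS; under eq_bigr do rewrite expr2.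
by rewrite mact_dot //; under eq_bigr do rewrite -expr2.
Qed.

End Algebra.

Section Rotation.
Variables (A : comAlgType R) (S : 'M[R]_3) (u : 'I_3 -> R) (v w : 'I_3 -> A).
Hypotheses (HS : orthogonal3 S) (Hu : maps_to_e1 S u).

Lemma rotated_sos_identities (f2 f3 f4 : A) :
  (\sum_j u j *: v j) *+ 2 = 0 ->
  f2 = \sum_j v j ^+ 2 + (\sum_j u j *: w j) *+ 2 ->
  f3 = (\sum_j v j * w j) *+ 2 -> f4 = \sum_j w j ^+ 2 ->
  let V := mact S v in let W := mact S w in let xi := 2%:R * W 0 in
  [/\ f2 - xi = V 1 ^+ 2 + V 2 ^+ 2,
      4%:R * f4 - xi ^+ 2 = 4%:R * (W 1 ^+ 2 + W 2 ^+ 2) &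
      (2%:R * (V 1 * W 2 - V 2 * W 1)) ^+ 2 + f3 ^+ 2
        = (f2 - xi) * (4%:R * f4 - xi ^+ 2)].
Proof.
move=> Huv Hf2 Hf3 Hf4 V W xi.
have V0 : V 0 = 0.
  apply/eqP; move/eqP: Huv.
  by rewrite /V (mact_row0 _ HS Hu) -scaler_nat scaler_eq0 pnatr_eq0.
have xiE : xi = (\sum_j u j *: w j) *+ 2 by rewrite /xi /W (mact_row0 _ HS Hu) mulr_natl.
have F2 : f2 - xi = V 1 ^+ 2 + V 2 ^+ 2.
  by rewrite Hf2 xiE -(mact_sqr_sum v HS) sum_ord3 -/V V0; ring.
have F4 : 4%:R * f4 - xi ^+ 2 = 4%:R * (W 1 ^+ 2 + W 2 ^+ 2).
  by rewrite /xi Hf4 -(mact_sqr_sum w HS) sum_ord3 -/W; ring.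
split=> //; rewrite F2 F4 Hf3 -(mact_dot v w HS) sum_ord3 -/V -/W V0; ring.
Qed.

End Rotation.
End OrthogonalAction.

Section BinaryForms.
Variable R : rcfType.
Local Notation MP := {mpoly R[2]}.

Lemma psd2_sqrD (g h : MP) : psd2 (g ^+ 2 + h ^+ 2).
Proof. by move=> a; rewrite rmorphD !rmorphXn addr_ge0 ?sqr_ge0. Qed.

Lemma psd2_natM n (g : MP) : psd2 g -> psd2 (n%:R * g).
Proof. by move=> g_psd a; rewrite rmorphM rmorph_nat mulr_ge0 ?ler0n ?g_psd. Qed.

Lemma coef_qform0 (u : R) (v w : MP) : (qform u v w)`_0 = w.
Proof. by rewrite /qform !coefD !coefCM !coefXn !coefX !coefC /= !mulr0 !add0r. Qed.

Lemma coef_qform2 (u : R) (v w : MP) : (qform u v w)`_2 = u%:MP.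
Proof. by rewrite /qform !coefD !coefCM !coefXn !coefX !coefC /= mulr1 mulr0 !addr0. Qed.

Lemma qform_lincomb_coef (T : 'M[R]_3) (u u' : 'I_3 -> R) (v w v' w' : 'I_3 -> MP) :
  (forall j, qform (u' j) (v' j) (w' j) = \sum_i (T i j)%:MP%:P * qform (u i) (v i) (w i)) ->
  (forall j, (u' j)%:MP = mact T^T (fun i => (u i)%:MP_[2]) j) /\ w' =1 mact T^T w.
Proof.
move=> Hq; split=> j.
  rewrite -(coef_qform2 (u' j) (v' j) (w' j)) Hq coef_sum.
  by apply: eq_bigr => i _; rewrite coefCM coef_qform2 mul_mpolyC mxE.
rewrite -(coef_qform0 (u' j) (v' j) (w' j)) Hq coef_sum.
by apply: eq_bigr => i _; rewrite coefCM coef_qform0 mul_mpolyC mxE.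
Qed.
End BinaryForms.

Theorem lemma3p7 (R : rcfType) (f2 f3 f4 : {mpoly R[2]})
  (u : 'I_3 -> R) (v w : 'I_3 -> {mpoly R[2]}) :
  f2 \is 2.-homog -> f3 \is 3.-homog -> f4 \is 4.-homog ->
  (forall i, v i \is 1.-homog) -> (forall i, w i \is 2.-homog) ->
  'X^4 + f2%:P * 'X^2 + f3%:P * 'X + f4%:P
    = \sum_(i < 3) (qform (u i) (v i) (w i)) ^+ 2 ->
  [/\ \sum_(i < 3) u i ^+ 2 = 1,
      (forall S : 'M[R]_3, orthogonal3 S -> maps_to_e1 S u ->
         let xi := xi_of S w in
         let eta := eta_of S v w in
         [/\ eta ^+ 2 + f3 ^+ 2 = (f2 - xi) * (4%:R * f4 - xi ^+ 2),
             psd2 (f2 - xi) & psd2 (4%:R * f4 - xi ^+ 2)]) &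
      (forall (u' : 'I_3 -> R) (v' w' : 'I_3 -> {mpoly R[2]}) (T S S' : 'M[R]_3),
         orthogonal3 T ->
         (forall j : 'I_3, qform (u' j) (v' j) (w' j)
                           = \sum_(i < 3) (T i j)%:MP%:P * qform (u i) (v i) (w i)) ->
         orthogonal3 S -> maps_to_e1 S u ->
         orthogonal3 S' -> maps_to_e1 S' u' ->
         xi_of S w = xi_of S' w')].
Proof.
move=> _ _ _ _ _ Hf.
have [Hu2 Huv Hf2 Hf3 Hf4] := sos_quartic_coef Hf.
have scaleE (a : 'I_3 -> R) (y : 'I_3 -> {mpoly R[2]}) :
    \sum_i (a i)%:MP * y i = \sum_i a i *: y i.
  by apply: eq_bigr => i _; apply: mul_mpolyC.
rewrite !scaleE in Huv Hf2.
split.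
- apply/eqP; rewrite -(mpolyC_eq 2) mpolyC1 -Hu2 rmorph_sum.
  by apply/eqP/eq_bigr => i _; apply: rmorphXn.
- move=> S HS Hu xi eta.
  have [F2 F4 Feta] := rotated_sos_identities HS Hu Huv Hf2 Hf3 Hf4.
  split=> //; first by rewrite /xi /xi_of F2; apply: psd2_sqrD.
  by rewrite /xi /xi_of F4; apply/psd2_natM/psd2_sqrD.
- move=> u' v' w' T S S' HT Hq HS Hu HS' Hu'.
  have [Hu'T Hw'T] := qform_lincomb_coef Hq.
  rewrite /xi_of (mact_row0 _ HS Hu) (mact_row0 _ HS' Hu') -!scaleE; congr (_ * _).
  under [RHS]eq_bigr do rewrite Hu'T Hw'T.
  by rewrite mact_dot //; apply: orthogonal3_trmx.
Qed.
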